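(* In the endogenous-network setting described in the context, let $(\delta,\xi)$ be an equilibrium of the endogenous friend game that involves at least two degrees. Then $\delta$ is nondecreasing on $S$, and for every $\theta\in S$ with $\delta(\theta)>0$, $$\xi(\theta)>x^{friend}_{\perp}(\theta,\delta(\theta))>x^{soc}_{end}(\theta,\delta(\theta))=x^{soc}_{\perp}(\theta,\delta(\theta)).$$
   Context: Fix an integer $n\ge2$, parameters $a>0$, $\phi\in\mathbb{R}$, $c>a(n-1)$ and $k>a(n-1)$. Agents' types are i.i.d. draws from an atomless probability distribution $F$ with compact support $S\subset[0,\infty)$; $\mathrm{E}$ denotes expectation with $\theta\sim F$. A symmetric pure-strategy profile is a pair of measurable functions $\delta:S\to\{0,1,\dots,n-1\}$ (degree choice) and bounded $\xi:S\to[0,\infty)$ (action choice) with $\mathrm{E}[\delta(\theta)]>0$; for bounded measurable $h$ on $S$ write $\widetilde{\mathrm{E}}[h(\theta)]=\mathrm{E}[\delta(\theta)h(\theta)]/\mathrm{E}[\delta(\theta)]$ (expectation over a neighbor). The profile is an equilibrium of the endogenous friend game if for every $\theta\in S$, the pair $(\delta(\theta),\xi(\theta))$ maximizes over $(d',y)\in\{0,\dots,n-1\}\times[0,\infty)$ the payoff $\theta y+a\,y\,d'\,\widetilde{\mathrm{E}}[\xi(\theta_j)]-\frac{c}{2}y^2-\phi(n-1)\mathrm{E}[\xi(\theta_j)]-\frac{k}{2}d'^2$. It involves at least two degrees if $\delta(\theta)$ takes at least two distinct values, each with positive $F$-probability. Comparison games: for a probability distribution $Q$ on $S\times\{0,\dots,n-1\}$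 of a pair $(\theta,D)$ with $\mathrm{E}_Q[D]>0$, let $\widetilde{\mathrm{E}}_Q[h(\theta,D)]=\mathrm{E}_Q[D\,h(\theta,D)]/\mathrm{E}_Q[D]$. A bounded measurable $z:S\times\{0,\dots,n-1\}\to[0,\infty)$ is an equilibrium of the friend game for $Q$ if for every $(\theta,d)$, $z(\theta,d)$ maximizes $\theta y+a\,y\,d\,\widetilde{\mathrm{E}}_Q[z(\theta',D')]-\frac{c}{2}y^2$ over $y\ge0$; it is an equilibrium of the society-wide game for $Q$ if the same holds with $\mathrm{E}_Q$ in place of $\widetilde{\mathrm{E}}_Q$. Since $c>a(n-1)$, each such game has a unique equilibrium. Let $Q_{end}$ be the law of $(\theta,\delta(\theta))$ with $\theta\sim F$, and $Q_\perp$ the product of $F$ and the law of $\delta(\theta)$. Then $x^{friend}_\perp$ is the equilibrium of the friend game for $Q_\perp$, and $x^{soc}_{end}$, $x^{soc}_\perp$ are the equilibria of the society-wide game for $Q_{end}$ and $Q_\perp$ respectively. *)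

From mathcomp Require Import all_boot all_order all_algebra.
From mathcomp Require Import all_classical all_reals all_analysis.
Import Order.TTheory GRing.Theory Num.Theory.
Import numFieldNormedType.Exports.
Local Open Scope classical_set_scope.
Local Open Scope ring_scope.

Set Implicit Arguments.
Unset Strict Implicit.
Unset Printing Implicit Defensive.

(* Support of a probability distribution F on R: the set of points all of
   whose open neighbourhoods have positive F-mass (the smallest closed set
   of full measure). *)
Definition supp {R : realType} (F : probability R R) : set R :=
  [set x | forall e : R, 0 < e -> (0 < F (ball x e))%E].

(* E[h(theta)], theta ~ F  (integration over the support S). *)
Definition EF {R : realType} (F : probability R R) (h : R -> R) : R :=
  Rintegral F (supp F) h.

(* Expectation over a neighbour: E[delta h] / E[delta]. *)
Definition Etil {R : realType} (F : probability R R) (delta : R -> nat)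
  (h : R -> R) : R :=
  EF F (fun x => (delta x)%:R * h x) / EF F (fun x => (delta x)%:R).

Definition payoff_end {R : realType} (n : nat) (a c k phi : R)
  (F : probability R R) (delta : R -> nat) (xi : R -> R)
  (theta : R) (d : nat) (y : R) : R :=
  theta * y + a * y * d%:R * Etil F delta xi - c / 2 * y ^+ 2
  - phi * (n.-1)%:R * EF F xi - k / 2 * (d%:R) ^+ 2.

Definition end_friend_eq {R : realType} (n : nat) (a c k phi : R)
  (F : probability R R) (delta : R -> nat) (xi : R -> R) : Prop :=
  [/\ measurable_fun (supp F) (fun x => ((delta x)%:R : R))
      /\ measurable_fun (supp F) xi,
      (exists M : R, forall x, supp F x -> `|xi x| <= M),
      (forall x, supp F x -> (delta x < n)%N /\ 0 <= xi x),
      0 < EF F (fun x => (delta x)%:R) &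
      forall theta, supp F theta ->
        forall (d : nat) (y : R), (d < n)%N -> 0 <= y ->
          payoff_end n a c k phi F delta xi theta d y
          <= payoff_end n a c k phi F delta xi theta (delta theta) (xi theta)].

Definition two_degrees {R : realType} (F : probability R R)
  (delta : R -> nat) : Prop :=
  exists d1 d2 : nat, d1 <> d2 /\
    (0 < F (supp F `&` [set x | delta x = d1]))%E /\
    (0 < F (supp F `&` [set x | delta x = d2]))%E.

(* Comparison games.  A distribution Q of (theta, D) on S x {0,..,n-1} is
   represented by its expectation functional h |-> E_Q[h(theta, D)]. *)

(* Q_end = law of (theta, delta theta), theta ~ F. *)
Definition EQ_end {R : realType} (F : probability R R) (delta : R -> nat)
  (h : R -> nat -> R) : R :=
  EF F (fun x => h x (delta x)).

(* Q_perp = F (x) law of delta(theta):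
   E[h] = sum_d P(delta = d) * E_F[h(theta, d)]. *)
Definition EQ_perp {R : realType} (n : nat) (F : probability R R)
  (delta : R -> nat) (h : R -> nat -> R) : R :=
  \sum_(d < n) EF F (fun x => if delta x == d then 1 else 0)
                 * EF F (fun x => h x d).

Definition EQtil {R : realType} (EQ : (R -> nat -> R) -> R)
  (h : R -> nat -> R) : R :=
  EQ (fun x d => d%:R * h x d) / EQ (fun x d => d%:R).

Definition admissible_z {R : realType} (n : nat) (F : probability R R)
  (z : R -> nat -> R) : Prop :=
  [/\ forall d, (d < n)%N -> measurable_fun (supp F) (z ^~ d),
      (exists M : R, forall x d, supp F x -> (d < n)%N -> `|z x d| <= M) &
      forall x d, supp F x -> (d < n)%N -> 0 <= z x d].

Definition friend_eq {R : realType} (n : nat) (a c : R)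
  (F : probability R R) (EQ : (R -> nat -> R) -> R) (z : R -> nat -> R) :=
  admissible_z n F z /\
  forall theta d, supp F theta -> (d < n)%N -> forall y : R, 0 <= y ->
    theta * y + a * y * d%:R * EQtil EQ z - c / 2 * y ^+ 2
    <= theta * z theta d + a * z theta d * d%:R * EQtil EQ z
       - c / 2 * (z theta d) ^+ 2.

Definition soc_eq {R : realType} (n : nat) (a c : R)
  (F : probability R R) (EQ : (R -> nat -> R) -> R) (z : R -> nat -> R) :=
  admissible_z n F z /\
  forall theta d, supp F theta -> (d < n)%N -> forall y : R, 0 <= y ->
    theta * y + a * y * d%:R * EQ z - c / 2 * y ^+ 2
    <= theta * z theta d + a * z theta d * d%:R * EQ z
       - c / 2 * (z theta d) ^+ 2.

From mathcomp Require Import all_boot all_order all_algebra.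
From mathcomp Require Import all_classical all_reals all_analysis.
From mathcomp Require Import measurable_realfun lra ring.
Import Order.TTheory GRing.Theory Num.Theory.
Import numFieldNormedType.Exports.
Local Open Scope classical_set_scope.
Local Open Scope ring_scope.
Set Implicit Arguments.
Unset Strict Implicit.
Unset Printing Implicit Defensive.

(* Every agent best-responds with the action (theta + a d Q) / c, where Q is
   the average action relevant to the game.  In the endogenous friend game the
   indirect payoff of degree d has increasing differences in (theta, d), so
   degrees are nondecreasing in the type.  Each average action solves a linear
   fixed-point equation (delta the degree, theta the type, E over F):
     m  (c E[delta] - a E[delta^2]) = E[delta theta]     endogenous friend game,
     m' (c E[delta] - a E[delta^2]) = E[delta] E[theta]  friend game for Q_perp,
     M  (c - a E[delta])            = E[theta]           society-wide games.
   Nondecreasing degrees taking two values on an atomless distribution have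
   positive variance and positive covariance with the type, hence M < m' < m,
   and the action comparison follows since the best response increases with
   the average action when d > 0. *)

Section support.
Context {R : realType} (F : probability R R).

Lemma closed_supp : closed (supp F).
Proof.
move=> x clx e e0.
have e20 : 0 < e / 2 by rewrite divr_gt0.
have [y [Fy xy]] := clx (ball x (e / 2)) (nbhsx_ballx x _ e20).
apply: (lt_le_trans (Fy _ e20)); apply: le_measure; rewrite ?inE;
  [exact: measurable_ball..|].
by move=> z; apply: ball_split.
Qed.

Lemma measurable_supp : measurable (supp F).
Proof. exact: closed_measurable (closed_supp). Qed.

Let radius (m : nat) : R := m.+1%:R^-1.

Let null_ball (i : nat) : set R := [set y | exists q m,
  unpickle i = Some (q, m) /\ F (ball (ratr q : R) (radius m)) = 0%E /\
  ball (ratr q : R) (radius m) y].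

Let negligible_null_ball i : F.-negligible (null_ball i).
Proof.
case Hi: (@unpickle (rat * nat)%type i) => [[q m]|]; last first.
  by apply: negligibleS (negligible_set0 F) => y [q [m [+ _]]]; rewrite Hi.
have [Fq0|Fq_neq0] := pselect (F (ball (ratr q : R) (radius m)) = 0%E).
  apply: (negligibleS (A := ball (ratr q : R) (radius m))).
    by move=> y [q' [m' [+ [_ +]]]]; rewrite Hi => -[<- <-].
  by apply/negligibleP => //; exact: measurable_ball.
apply: negligibleS (negligible_set0 F) => y [q' [m' [+ [+ _]]]].
by rewrite Hi => -[<- <-].
Qed.

(* A point outside the support has a null neighbourhood, which contains a
   ball with rational centre and radius 1/(m+1) around the point. *)
Let setC_supp_cover : ~` supp F `<=` \bigcup_i null_ball i.
Proof.
move=> x /= x_supp.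
have [e [e0 Fe]] : exists e : R, 0 < e /\ F (ball x e) = 0%E.
  apply: contrapT => no_null; apply: x_supp => e e0.
  rewrite lt_def measure_ge0 andbT; apply/eqP => Fe.
  by apply: no_null; exists e.
have e20 : 0 < e / 2 by rewrite divr_gt0.
pose m := Num.truncn ((e / 2)^-1).
have rm : radius m < e / 2.
  rewrite /radius -[X in _ < X]invrK ltf_pV2 ?posrE ?invr_gt0 //.
  exact: Num.Theory.truncnS_gt.
have r0 : 0 < radius m by rewrite /radius invr_gt0.
have xrx : x - radius m < x + radius m by rewrite ltrD2l gtrN.
have [q] := rat_in_itvoo xrx.
rewrite in_itv /= => /andP[xq qx].
have bq : ball (ratr q : R) (radius m) x.
  by rewrite /ball /= ltr_norml; apply/andP; split; lra.
have sub : ball (ratr q : R) (radius m) `<=` ball x e.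
  move=> y; rewrite /ball /= => qy; move: bq; rewrite /ball /= => qx'.
  have := ler_normB (x - ratr q) (y - ratr q).
  rewrite opprB addrA subrK; rewrite distrC in qx'; rewrite distrC in qy; lra.
exists (pickle (q, m)) => //; exists q, m; rewrite pickleK; split=> //; split=> //.
apply/eqP; rewrite -measure_le0 -Fe le_measure ?inE //;
  exact: measurable_ball.
Qed.

Lemma probability_supp : F (supp F) = 1%E.
Proof.
have [N [mN N0 sN]] := negligible_bigcup negligible_null_ball.
have mC : measurable (~` supp F) by apply: measurableC; exact: measurable_supp.
have FC : F (~` supp F) = 0%E.
  apply/eqP; rewrite -measure_le0 -N0 le_measure ?inE //.
  exact: subset_trans setC_supp_cover sN.
by rewrite -[supp F]setCK probability_setC // FC sube0.
Qed.

End support.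

Section expectation.
Context {R : realType} (F : probability R R).
Local Notation D := (supp F).
Implicit Types f g : R -> R.

Definition bounded_measurable f :=
  measurable_fun D f /\ exists M : R, forall x, D x -> `|f x| <= M.

Lemma integrable_bounded_measurable f :
  bounded_measurable f -> F.-integrable D (EFin \o f).
Proof.
move=> [mf [M fM]]; apply/integrableP; split; first exact/measurable_EFinP.
apply: (@le_lt_trans _ _ (`|M|%:E * F D)%E); last first.
  by rewrite probability_supp mule1 ltry.
apply: integral_le_bound => //; [exact: measurable_supp|exact/measurable_EFinP|].
by apply: aeW => x Dx /=; rewrite lee_fin (le_trans (fM x Dx)) ?ler_norm.
Qed.

Lemma bounded_measurable_cst r : bounded_measurable (fun => r).
Proof. by split; [exact: measurable_cst|exists `|r|]. Qed.

Lemma bounded_measurableD f g : bounded_measurable f -> bounded_measurable g ->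
  bounded_measurable (fun x => f x + g x).
Proof.
move=> [mf [M fM]] [mg [N gN]]; split; first exact: measurable_funD.
by exists (M + N) => x Dx; rewrite (le_trans (ler_normD _ _)) ?lerD ?fM ?gN.
Qed.

Lemma bounded_measurableM f g : bounded_measurable f -> bounded_measurable g ->
  bounded_measurable (fun x => f x * g x).
Proof.
move=> [mf [M fM]] [mg [N gN]]; split; first exact: measurable_funM.
by exists (M * N) => x Dx; rewrite normrM ler_pM ?fM ?gN.
Qed.

Lemma eq_bounded_measurable f g : {in D, f =1 g} ->
  bounded_measurable f -> bounded_measurable g.
Proof.
move=> fg [mf [M fM]]; split; first exact: eq_measurable_fun mf.
by exists M => x Dx; rewrite -fg ?inE ?fM.
Qed.

Lemma bounded_measurable_sum (I : Type) (r : seq I) (f : I -> R -> R) :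
  (forall i, bounded_measurable (f i)) ->
  bounded_measurable (fun x => \sum_(i <- r) f i x).
Proof.
move=> bf; elim: r => [|i r IHr].
  by apply: eq_bounded_measurable (bounded_measurable_cst 0) => x; rewrite big_nil.
apply: eq_bounded_measurable (bounded_measurableD (bf i) IHr) => x.
by rewrite big_cons.
Qed.

Lemma bounded_measurable_id : compact D -> bounded_measurable id.
Proof.
move=> cD; split; first exact: measurable_id.
have [M [_ DM]] := compact_bounded cD.
by exists (M + 1) => x Dx; apply: (DM (M + 1)) => //; rewrite ltrDl.
Qed.

Lemma eq_EF f g : {in D, f =1 g} -> EF F f = EF F g.
Proof. exact: eq_Rintegral. Qed.

Lemma EF_cst r : EF F (fun => r) = r.
Proof.
rewrite /EF (Rintegral_cst _ (measurable_supp F)).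
by rewrite [X in fine X](probability_supp F) mulr1.
Qed.

Lemma EFD f g : bounded_measurable f -> bounded_measurable g ->
  EF F (fun x => f x + g x) = EF F f + EF F g.
Proof.
by move=> bf bg; apply: RintegralD; [exact: measurable_supp|
  exact: integrable_bounded_measurable..].
Qed.

Lemma EFZl r f : bounded_measurable f -> EF F (fun x => r * f x) = r * EF F f.
Proof.
by move=> bf; apply: RintegralZl; [exact: measurable_supp|
  exact: integrable_bounded_measurable].
Qed.

Lemma EF_sum (I : Type) (r : seq I) (f : I -> R -> R) :
  (forall i, bounded_measurable (f i)) ->
  EF F (fun x => \sum_(i <- r) f i x) = \sum_(i <- r) EF F (f i).
Proof.
move=> bf; elim: r => [|i r IHr].
  by rewrite big_nil -[RHS](EF_cst 0); apply: eq_EF => x; rewrite big_nil.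
rewrite big_cons -IHr -EFD //; last exact: bounded_measurable_sum.
by apply: eq_EF => x; rewrite big_cons.
Qed.

Lemma EF_ge0 f : (forall x, D x -> 0 <= f x) -> 0 <= EF F f.
Proof. exact: Rintegral_ge0. Qed.

Lemma le_EF f g : bounded_measurable f -> bounded_measurable g ->
  (forall x, D x -> f x <= g x) -> EF F f <= EF F g.
Proof.
by move=> bf bg fg; apply: le_Rintegral => //; [exact: measurable_supp|
  exact: integrable_bounded_measurable..].
Qed.

(* A nonnegative function with null integral vanishes almost everywhere. *)
Lemma EF_gt0 f (A : set R) : bounded_measurable f ->
  (forall x, D x -> 0 <= f x) -> measurable A -> A `<=` D -> (0 < F A)%E ->
  (forall x, A x -> 0 < f x) -> 0 < EF F f.
Proof.
move=> bf f0 mA AD FA fA; rewrite lt_def EF_ge0 // andbT; apply/eqP => Ef0.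
have fin := integrable_fin_num (measurable_supp F)
  (integrable_bounded_measurable bf).
have int0 : (\int[F]_(x in D) (EFin \o f) x = 0)%E.
  by rewrite -[LHS]fineK //; move: Ef0; rewrite /EF /Rintegral => ->.
have int_abs0 : (\int[F]_(x in D) `|(EFin \o f) x| = 0)%E.
  rewrite -[RHS]int0; apply: eq_integral => x; rewrite inE => Dx.
  by rewrite /= ger0_norm ?f0.
have [N [mN N0 fN]] : ae_eq F D (EFin \o f) (cst 0).
  apply/(ae_eq_integral_abs F (measurable_supp F)) => //.
  by apply/measurable_EFinP; case: bf.
have : (F A <= F N)%E.
  apply: le_measure; rewrite ?inE //= => x Ax; apply: fN => /(_ (AD x Ax)) [].
  by apply/eqP; rewrite gt_eqF ?fA.
by rewrite N0 leNgt FA.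
Qed.

Lemma EF_cov f g (t : R) : bounded_measurable f -> bounded_measurable g ->
  EF F (fun x => (f x - EF F f) * (g x - t)) =
  EF F (fun x => f x * g x) - EF F f * EF F g.
Proof.
move=> bf bg; set Ef := EF F f.
have bZ r h : bounded_measurable h -> bounded_measurable (fun x => r * h x).
  exact: bounded_measurableM (bounded_measurable_cst r).
have bfg := bounded_measurableM bf bg.
rewrite (eq_EF (g := fun x => (f x * g x + - t * f x) + (- Ef * g x + Ef * t)));
  last by move=> x _; ring.
rewrite (EFD (bounded_measurableD bfg (bZ _ _ bf))
             (bounded_measurableD (bZ _ _ bg) (bounded_measurable_cst _))).
rewrite (EFD bfg (bZ _ _ bf)) (EFD (bZ _ _ bg) (bounded_measurable_cst _)).
by rewrite (EFZl _ bf) (EFZl _ bg) EF_cst -/Ef; ring.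
Qed.

Lemma EF_var_gt0 f (A : set R) : bounded_measurable f ->
  measurable A -> A `<=` D -> (0 < F A)%E -> (forall x, A x -> f x != EF F f) ->
  EF F f ^+ 2 < EF F (fun x => f x ^+ 2).
Proof.
move=> bf mA AD FA fA; rewrite -subr_gt0.
under eq_EF do rewrite expr2.
rewrite expr2 -(EF_cov (EF F f) bf bf).
apply: (EF_gt0 (A := A)) => //.
- apply: bounded_measurableM; apply: bounded_measurableD => //;
    exact: bounded_measurable_cst.
- by move=> x _; rewrite -expr2 sqr_ge0.
- by move=> x Ax; rewrite -expr2 lt_def sqr_ge0 sqrf_eq0 subr_eq0 fA.
Qed.

End expectation.

Lemma single_crossing_threshold {R : realType} (D : set R) (f : R -> R) (mu : R) :
  compact D -> (forall x y, D x -> D y -> x <= y -> f x <= f y) ->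
  exists t0, forall x, D x -> 0 <= (f x - mu) * (x - t0) /\
    (f x != mu -> x != t0 -> 0 < (f x - mu) * (x - t0)).
Proof.
move=> cD f_mono.
have [M [_ DM]] := compact_bounded cD.
have xM x : D x -> `|x| <= `|M| + 1.
  move=> Dx; apply: (DM (`|M| + 1)) => //.
  by rewrite (le_lt_trans (ler_norm M)) ?ltrDl.
pose below := [set - (`|M| + 1)] `|` [set x | D x /\ f x < mu].
have sup_below : has_sup below.
  split; first by exists (- (`|M| + 1)); left.
  exists (`|M| + 1) => y [->|[Dy _]]; last by rewrite (le_trans (ler_norm y)) ?xM.
  by rewrite (@le_trans _ _ 0) // oppr_le0 addr_ge0.
exists (sup below) => x Dx.
have [x_lt|x_gt|x_eq] := ltgtP x (sup below).
- have x_sup : 0 < sup below - x by rewrite subr_gt0.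
  have [e below_e xe] := sup_adherent x_sup sup_below.
  rewrite opprB addrC subrK in xe.
  have {below_e} [De fe] : D e /\ f e < mu.
    case: below_e => // e_eq; move: xe; rewrite e_eq ltNge => /negP[].
    by move: (xM x Dx); rewrite ler_norml => /andP[].
  have fx : f x < mu by rewrite (le_lt_trans _ fe) ?f_mono ?ltW.
  have cross : 0 < (f x - mu) * (x - sup below) by rewrite nmulr_rgt0 ?subr_lt0.
  by split=> [|_ _]; [exact: ltW|].
- have fx : mu <= f x.
    rewrite leNgt; apply/negP => fx.
    have := sup_upper_bound sup_below (or_intror (conj Dx fx)).
    by rewrite leNgt x_gt.
  split; first by apply: mulr_ge0; rewrite subr_ge0 // ltW.
  by move=> fx_mu _; rewrite mulr_gt0 ?subr_gt0 // lt_neqAle eq_sym fx_mu fx.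
- by rewrite x_eq subrr mulr0.
Qed.

Section atomless.
Context {R : realType} (F : probability R R).
Local Notation D := (supp F).
Hypothesis atomless : forall x : R, F [set x] = 0%E.

Lemma measure_setD1 (B : set R) (t : R) : measurable B -> F (B `\` [set t]) = F B.
Proof.
move=> mB; have Bt0 : F (B `&` [set t]) = 0%E.
  apply/eqP; rewrite -measure_le0 -(atomless t) le_measure ?inE //.
  exact: measurableI.
transitivity (F (B `\` [set t]) + F (B `&` [set t]))%E; first by rewrite Bt0 adde0.
by rewrite -measureDI.
Qed.

Lemma EF_id_gt0 : compact D -> D `<=` [set x | 0 <= x] -> 0 < EF F id.
Proof.
move=> cD D_ge0.
have mD1 : measurable (D `\` [set 0]).
  exact: measurableD (measurable_supp F) (measurable_set1 0).
apply: (EF_gt0 (A := D `\` [set 0])) => //; first exact: bounded_measurable_id.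
- by rewrite measure_setD1 ?probability_supp ?lte01 //; exact: measurable_supp.
- by move=> x [Dx x0]; rewrite lt_def D_ge0 // andbT; apply/eqP => x_0; apply: x0.
Qed.

(* Below the threshold where f crosses its mean, f - EF f and x - t0 are
   both nonpositive; above it both are nonnegative. *)
Lemma EF_cov_gt0 f (A : set R) : compact D -> bounded_measurable F f ->
  (forall x y, D x -> D y -> x <= y -> f x <= f y) ->
  measurable A -> A `<=` D -> (0 < F A)%E -> (forall x, A x -> f x != EF F f) ->
  EF F f * EF F id < EF F (fun x => f x * x).
Proof.
move=> cD bf f_mono mA AD FA fA; rewrite -subr_gt0.
have [t0 t0_cross] := single_crossing_threshold (EF F f) cD f_mono.
have bid := bounded_measurable_id cD.
rewrite -(EF_cov t0 bf bid).
apply: (EF_gt0 (A := A `\` [set t0])) => //.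
- apply: bounded_measurableM; apply: bounded_measurableD => //;
    exact: bounded_measurable_cst.
- by move=> x Dx; case: (t0_cross x Dx).
- exact: measurableD.
- by move=> x [/AD].
- by rewrite measure_setD1.
- move=> x [Ax xt0]; apply: (t0_cross x (AD x Ax)).2; first exact: fA.
  by apply/eqP => x_t0; apply: xt0.
Qed.

End atomless.

Section degree_distribution.
Context {R : realType} (F : probability R R) (n : nat) (delta : R -> nat).
Local Notation D := (supp F).
Hypothesis measurable_delta : measurable_fun D (fun x => (delta x)%:R : R).
Hypothesis delta_lt : forall x, D x -> (delta x < n)%N.

Local Notation indicator d := (fun x => if delta x == d then 1 else 0 : R).

Lemma measurable_delta_eq (d : nat) : measurable (D `&` [set x | delta x = d]).
Proof.
rewrite (_ : [set x | delta x = d] = (fun x => (delta x)%:R : R) @^-1` [set d%:R]).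
  by apply: measurable_delta; [exact: measurable_supp|exact: measurable_set1].
by apply/seteqP; split=> x /=; [move->|move/eqP; rewrite eqr_nat => /eqP].
Qed.

Lemma bounded_measurable_indicator (d : nat) : bounded_measurable F (indicator d).
Proof.
split; last by exists 1 => x _; case: ifP; rewrite ?normr1 ?normr0.
rewrite (_ : indicator d = fun x => if (delta x)%:R == d%:R :> R then 1 else 0).
  2: by apply: funext => x; rewrite eqr_nat.
apply: measurable_fun_if => //; first exact: measurable_supp.
exact: measurable_fun_eqr measurable_delta (measurable_cst _).
Qed.

Lemma sum_indicator_delta (g : nat -> R) x :
  D x -> \sum_(d < n) g d * indicator d x = g (delta x).
Proof.
move=> Dx; rewrite (bigD1 (Ordinal (delta_lt Dx))) //= eqxx mulr1 big1 ?addr0 //.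
by move=> d /negPf; rewrite -val_eqE /= eq_sym => ->; rewrite mulr0.
Qed.

Lemma bounded_measurable_comp_delta (g : nat -> R) :
  bounded_measurable F (fun x => g (delta x)).
Proof.
apply: (eq_bounded_measurable (f := fun x => \sum_(d < n) g d * indicator d x)).
  by move=> x; rewrite inE; exact: sum_indicator_delta.
apply: bounded_measurable_sum => d.
exact: bounded_measurableM (bounded_measurable_cst F _)
  (bounded_measurable_indicator _).
Qed.

Lemma EF_comp_delta (g : nat -> R) :
  EF F (fun x => g (delta x)) = \sum_(d < n) EF F (indicator d) * g d.
Proof.
transitivity (EF F (fun x => \sum_(d < n) g d * indicator d x)).
  by apply: eq_EF => x; rewrite inE => Dx; rewrite sum_indicator_delta.
rewrite EF_sum; last first.
  move=> d; exact: bounded_measurableM (bounded_measurable_cst F _)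
                      (bounded_measurable_indicator _).
apply: eq_bigr => d _; rewrite EFZl 1?mulrC //.
exact: bounded_measurable_indicator.
Qed.

Lemma EQ_perp_affine (u v : nat -> R) (h : R -> nat -> R) : compact D ->
  (forall x d, D x -> (d < n)%N -> h x d = u d * x + v d) ->
  EQ_perp n F delta h =
  EF F (fun x => u (delta x)) * EF F id + EF F (fun x => v (delta x)).
Proof.
move=> cD hE; have bid := bounded_measurable_id cD.
have bc := bounded_measurable_comp_delta.
rewrite /EQ_perp (eq_bigr (fun d : 'I_n =>
  EF F (indicator d) * (EF F id * u d + v d))) => [|d _]; last first.
  congr (_ * _); rewrite (eq_EF (g := fun x => u d * x + v d)) => [|x]; last first.
    by rewrite inE => Dx; exact: hE.
  have bu : bounded_measurable F (fun x => u d * x).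
    exact: bounded_measurableM (bounded_measurable_cst F _) bid.
  by rewrite (EFD bu (bounded_measurable_cst F _)) EFZl // EF_cst mulrC.
have bZu := bounded_measurableM (bounded_measurable_cst F (EF F id)) (bc u).
by rewrite -(EF_comp_delta (fun d => EF F id * u d + v d)) (EFD bZu (bc v))
  (EFZl _ (bc u)) mulrC.
Qed.

Lemma EQ_perp_ge0 (h : R -> nat -> R) :
  (forall x d, D x -> (d < n)%N -> 0 <= h x d) -> 0 <= EQ_perp n F delta h.
Proof.
move=> h0; apply: sumr_ge0 => d _.
by apply: mulr_ge0; apply: EF_ge0 => x Dx; [case: ifP|exact: h0].
Qed.

Lemma admissible_EQ_end_ge0 z : admissible_z n F z -> 0 <= EQ_end F delta z.
Proof. by case=> _ _ z_ge0; apply: EF_ge0 => x Dx; exact: z_ge0 (delta_lt Dx). Qed.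

Lemma admissible_EQ_perp_ge0 z : admissible_z n F z -> 0 <= EQ_perp n F delta z.
Proof. by case=> _ _ z_ge0; apply: EQ_perp_ge0. Qed.

Lemma admissible_EQtil_perp_ge0 z :
  admissible_z n F z -> 0 <= EQtil (EQ_perp n F delta) z.
Proof.
case=> _ _ z_ge0; apply: divr_ge0; apply: EQ_perp_ge0 => x d Dx dn //.
by rewrite mulr_ge0 ?z_ge0.
Qed.

Lemma EF_delta_sqr_le :
  EF F (fun x => (delta x)%:R ^+ 2) <= (n.-1)%:R * EF F (fun x => (delta x)%:R).
Proof.
have bd := bounded_measurable_comp_delta (fun d => d%:R).
rewrite -EFZl //; apply: le_EF => [||x Dx].
- exact: (bounded_measurable_comp_delta (fun d => d%:R ^+ 2)).
- exact: bounded_measurableM (bounded_measurable_cst F _) bd.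
rewrite expr2 ler_wpM2r // ler_nat -ltnS (leq_trans (delta_lt Dx)) //.
exact: leqSpred.
Qed.

Lemma two_degrees_nonconstant (mu : R) : two_degrees F delta ->
  exists A, [/\ measurable A, A `<=` D, (0 < F A)%E &
                forall x, A x -> (delta x)%:R != mu].
Proof.
move=> [d1 [d2 [d12 [Fd1 Fd2]]]].
have [di [Fdi di_mu]] : exists di,
    (0 < F (D `&` [set x | delta x = di]))%E /\ di%:R != mu.
  have [d1_mu|] := eqVneq (d1%:R : R) mu; last by exists d1.
  exists d2; split=> //; apply/eqP => d2_mu; apply: d12.
  by apply/eqP; rewrite -(eqr_nat R) d1_mu d2_mu.
exists (D `&` [set x | delta x = di]); split=> //.
- exact: measurable_delta_eq.
- by move=> x [_ ->].
Qed.

Lemma two_degrees_var_cov_gt0 : (forall x : R, F [set x] = 0%E) -> compact D ->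
  (forall t1 t2, D t1 -> D t2 -> t1 <= t2 -> (delta t1 <= delta t2)%N) ->
  two_degrees F delta ->
  EF F (fun x => (delta x)%:R) ^+ 2 < EF F (fun x => (delta x)%:R ^+ 2) /\
  EF F (fun x => (delta x)%:R) * EF F id < EF F (fun x => (delta x)%:R * x).
Proof.
move=> atomless cD delta_mono two_deg.
have bdelta : bounded_measurable F (fun x => (delta x)%:R).
  exact: (bounded_measurable_comp_delta (fun d => d%:R)).
have deltaR_mono x y : D x -> D y -> x <= y -> (delta x)%:R <= (delta y)%:R :> R.
  by move=> Dx Dy xy; rewrite ler_nat delta_mono.
have [A [mA AD FA A_nonconst]] :=
  two_degrees_nonconstant (EF F (fun x => (delta x)%:R)) two_deg.
split; first exact: EF_var_gt0 bdelta mA AD FA A_nonconst.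
exact: (EF_cov_gt0 atomless cD bdelta deltaR_mono mA AD FA A_nonconst).
Qed.

End degree_distribution.

Definition best_response {R : realFieldType} (a c t : R) (d : nat) (Q : R) : R :=
  (t + a * d%:R * Q) / c.

Section best_response.
Context {R : realFieldType} (a c t Q : R) (d : nat).
Hypotheses (a_ge0 : 0 <= a) (c_gt0 : 0 < c) (t_ge0 : 0 <= t) (Q_ge0 : 0 <= Q).

Lemma best_response_ge0 : 0 <= best_response a c t d Q.
Proof.
by apply: divr_ge0; [rewrite addr_ge0 // !mulr_ge0|exact: ltW].
Qed.

Lemma best_response_argmax (z : R) :
  (forall y, 0 <= y -> t * y + a * y * d%:R * Q - c / 2 * y ^+ 2 <=
                       t * z + a * z * d%:R * Q - c / 2 * z ^+ 2) ->
  z = best_response a c t d Q.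
Proof.
set b := best_response a c t d Q => z_opt.
have square y : t * y + a * y * d%:R * Q - c / 2 * y ^+ 2 =
                c / 2 * b ^+ 2 - c / 2 * (y - b) ^+ 2.
  by rewrite /b /best_response; field; rewrite gt_eqF.
have := z_opt b best_response_ge0; rewrite !square subrr expr0n /= mulr0 subr0.
move=> gap; have : c / 2 * (z - b) ^+ 2 <= 0 by lra.
rewrite pmulr_rle0 ?divr_gt0 // => zb.
by apply/eqP; rewrite -subr_eq0 -sqrf_eq0 eq_le zb sqr_ge0.
Qed.

End best_response.

Lemma best_response_ltr {R : realFieldType} (a c t Q1 Q2 : R) (d : nat) :
  0 < a -> 0 < c -> (0 < d)%N -> Q1 < Q2 ->
  best_response a c t d Q1 < best_response a c t d Q2.
Proof.
move=> a0 c0 d0 Q12.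
by rewrite ltr_pM2r ?invr_gt0 // ltrD2l ltr_pM2l // mulr_gt0 ?ltr0n.
Qed.

Section comparison_games.
Context {R : realType} (F : probability R R) (n : nat) (a c : R) (delta : R -> nat).
Local Notation D := (supp F).
Hypotheses (a_ge0 : 0 <= a) (c_gt0 : 0 < c).
Hypotheses (D_ge0 : D `<=` [set x | 0 <= x]) (D_compact : compact D).
Hypothesis measurable_delta : measurable_fun D (fun x => (delta x)%:R : R).
Hypothesis delta_lt : forall x, D x -> (delta x < n)%N.

Local Notation Ed := (EF F (fun x => (delta x)%:R)).
Local Notation Ed2 := (EF F (fun x => (delta x)%:R ^+ 2)).
Local Notation Eth := (EF F id).

Lemma soc_eq_best_response EQ z : soc_eq n a c F EQ z -> 0 <= EQ z ->
  forall t d, D t -> (d < n)%N -> z t d = best_response a c t d (EQ z).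
Proof.
by move=> [_ z_opt] EQz_ge0 t d Dt dn; apply: best_response_argmax => //;
  [exact: D_ge0|exact: z_opt].
Qed.

Lemma friend_eq_best_response EQ z : friend_eq n a c F EQ z -> 0 <= EQtil EQ z ->
  forall t d, D t -> (d < n)%N -> z t d = best_response a c t d (EQtil EQ z).
Proof.
by move=> [_ z_opt] EQz_ge0 t d Dt dn; apply: best_response_argmax => //;
  [exact: D_ge0|exact: z_opt].
Qed.

Let bounded_delta (g : nat -> R) :=
  bounded_measurable_comp_delta measurable_delta delta_lt g.
Let bounded_id := bounded_measurable_id D_compact.

Lemma soc_eq_EQ_end_fixed z : soc_eq n a c F (EQ_end F delta) z ->
  EQ_end F delta z * (c - a * Ed) = Eth.
Proof.
move=> z_eq; set M := EQ_end F delta z.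
have zE := soc_eq_best_response z_eq (admissible_EQ_end_ge0 delta_lt z_eq.1).
have M_fixed : M = c^-1 * Eth + (a * M / c) * Ed.
  rewrite -(EFZl _ bounded_id) -(EFZl _ (bounded_delta _)) -EFD; last 2 first.
  - exact: bounded_measurableM (bounded_measurable_cst F _) bounded_id.
  - exact: bounded_measurableM (bounded_measurable_cst F _) (bounded_delta _).
  apply: eq_EF => x; rewrite inE => Dx; rewrite zE ?delta_lt // -/M.
  by rewrite /best_response; field; rewrite gt_eqF.
by rewrite mulrBr {1}M_fixed; field; rewrite gt_eqF.
Qed.

Lemma soc_eq_EQ_perp_fixed z : soc_eq n a c F (EQ_perp n F delta) z ->
  EQ_perp n F delta z * (c - a * Ed) = Eth.
Proof.
move=> z_eq; set M := EQ_perp n F delta z.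
have zE := soc_eq_best_response z_eq (admissible_EQ_perp_ge0 delta z_eq.1).
have M_fixed : M = c^-1 * Eth + (a * M / c) * Ed.
  rewrite {1}/M (EQ_perp_affine measurable_delta delta_lt
    (u := fun => c^-1) (v := fun d => a * M / c * d%:R)) //.
    by rewrite EF_cst (EFZl _ (bounded_delta _)).
  by move=> x d Dx dn; rewrite zE // -/M /best_response; field; rewrite gt_eqF.
by rewrite mulrBr {1}M_fixed; field; rewrite gt_eqF.
Qed.

Lemma friend_eq_EQtil_perp_fixed z :
  0 < Ed -> friend_eq n a c F (EQ_perp n F delta) z ->
  EQtil (EQ_perp n F delta) z * (c * Ed - a * Ed2) = Ed * Eth.
Proof.
move=> Ed_gt0 z_eq; set m := EQtil (EQ_perp n F delta) z.
have degree_mean : EQ_perp n F delta (fun _ d => d%:R) = Ed.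
  rewrite (EQ_perp_affine measurable_delta delta_lt
    (u := fun => 0) (v := fun d => d%:R)) ?EF_cst ?mul0r ?add0r //.
  by move=> x d _ _; rewrite mul0r add0r.
have zE := friend_eq_best_response z_eq (admissible_EQtil_perp_ge0 delta z_eq.1).
have m_fixed : m * Ed = c^-1 * Ed * Eth + (a * m / c) * Ed2.
  have -> : m * Ed = EQ_perp n F delta (fun x d => d%:R * z x d).
    by rewrite /m /EQtil degree_mean divfK ?gt_eqF.
  rewrite (EQ_perp_affine measurable_delta delta_lt
    (u := fun d => c^-1 * d%:R) (v := fun d => a * m / c * d%:R ^+ 2)) //.
    rewrite (EFZl _ (bounded_delta _)).
    by rewrite (EFZl _ (bounded_delta (fun d => d%:R ^+ 2))).
  by move=> x d Dx dn; rewrite zE // -/m /best_response; field; rewrite gt_eqF.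
have -> : m * (c * Ed - a * Ed2) = c * (m * Ed) - a * m * Ed2 by ring.
by rewrite m_fixed; field; rewrite gt_eqF.
Qed.

End comparison_games.

Section endogenous_equilibrium.
Context {R : realType} (F : probability R R) (n : nat) (a c k phi : R).
Context (delta : R -> nat) (xi : R -> R).
Local Notation D := (supp F).
Hypotheses (a_gt0 : 0 < a) (c_gt0 : 0 < c) (k_gt0 : 0 < k).
Hypothesis D_ge0 : D `<=` [set x | 0 <= x].
Hypothesis equilibrium : end_friend_eq n a c k phi F delta xi.

Local Notation Ed := (EF F (fun x => (delta x)%:R)).
Local Notation Ed2 := (EF F (fun x => (delta x)%:R ^+ 2)).
Local Notation m := (Etil F delta xi).
Local Notation payoff := (payoff_end n a c k phi F delta xi).

Let delta_lt x : D x -> (delta x < n)%N.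
Proof. by case: equilibrium => _ _ + _ _ => /[apply] -[]. Qed.

Let xi_ge0 x : D x -> 0 <= xi x.
Proof. by case: equilibrium => _ _ + _ _ => /[apply] -[]. Qed.

Let Ed_gt0 : 0 < Ed.
Proof. by case: equilibrium. Qed.

Let xi_optimal t d y : D t -> (d < n)%N -> 0 <= y ->
  payoff t d y <= payoff t (delta t) (xi t).
Proof. by case: equilibrium => _ _ _ _ opt Dt dn y0; exact: opt. Qed.

Lemma Etil_xi_ge0 : 0 <= m.
Proof.
apply: divr_ge0; last exact: ltW.
by apply: EF_ge0 => x Dx; rewrite mulr_ge0 ?xi_ge0.
Qed.

Lemma xi_best_response t : D t -> xi t = best_response a c t (delta t) m.
Proof.
move=> Dt; apply: best_response_argmax => [||||y y0].
- exact: ltW.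
- done.
- exact: D_ge0.
- exact: Etil_xi_ge0.
by have := xi_optimal Dt (delta_lt Dt) y0; rewrite /payoff_end; lra.
Qed.

(* With no spillover, any positive degree is a pure cost. *)
Lemma Etil_xi_gt0 : 0 < m.
Proof.
rewrite lt_def Etil_xi_ge0 andbT; apply/eqP => m0.
have delta0 t : D t -> (delta t)%:R = 0 :> R.
  move=> Dt; have n0 : (0 < n)%N := leq_ltn_trans (leq0n _) (delta_lt Dt).
  have := xi_optimal Dt n0 (xi_ge0 Dt); rewrite /payoff_end m0 => opt.
  have : k / 2 * (delta t)%:R ^+ 2 <= 0 by lra.
  rewrite pmulr_rle0 ?divr_gt0 // => sq_le0.
  by apply/eqP; rewrite -sqrf_eq0 eq_le sq_le0 sqr_ge0.
move: Ed_gt0; rewrite (eq_EF (g := fun => 0)) ?EF_cst ?ltxx // => x.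
by rewrite inE => /delta0.
Qed.

Let indirect_payoff t (d : nat) := payoff t d (best_response a c t d m).

Lemma indirect_payoff_increasing_differences t1 t2 (d1 d2 : nat) :
  indirect_payoff t2 d2 - indirect_payoff t2 d1
  - (indirect_payoff t1 d2 - indirect_payoff t1 d1) =
  a * m / c * (t2 - t1) * (d2%:R - d1%:R).
Proof.
by rewrite /indirect_payoff /payoff_end /best_response; field; rewrite gt_eqF.
Qed.

Lemma indirect_payoff_le_delta t d : D t -> (d < n)%N ->
  indirect_payoff t d <= indirect_payoff t (delta t).
Proof.
move=> Dt dn; rewrite /indirect_payoff -xi_best_response //.
apply: xi_optimal => //.
apply: best_response_ge0 => //; [exact: ltW|exact: D_ge0|exact: Etil_xi_ge0].
Qed.

Lemma delta_nondecreasing t1 t2 : D t1 -> D t2 -> t1 <= t2 ->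
  (delta t1 <= delta t2)%N.
Proof.
move=> D1 D2; rewrite le_eqVlt => /predU1P[-> //|t12].
have incr := indirect_payoff_increasing_differences t1 t2 (delta t1) (delta t2).
have le1 := indirect_payoff_le_delta D1 (delta_lt D2).
have le2 := indirect_payoff_le_delta D2 (delta_lt D1).
have : 0 <= a * m / c * (t2 - t1) * ((delta t2)%:R - (delta t1)%:R).
  by rewrite -incr; lra.
have pos : 0 < a * m / c * (t2 - t1).
  by rewrite mulr_gt0 ?subr_gt0 // divr_gt0 // mulr_gt0 // Etil_xi_gt0.
by rewrite pmulr_rge0 // subr_ge0 ler_nat.
Qed.

Lemma Etil_xi_fixed : compact D ->
  m * (c * Ed - a * Ed2) = EF F (fun x => (delta x)%:R * x).
Proof.
move=> cD; have mdelta : measurable_fun D (fun x => (delta x)%:R : R).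
  by case: equilibrium => -[].
have bdelta := bounded_measurable_comp_delta mdelta delta_lt.
have bdelta2 := bdelta (fun d => d%:R ^+ 2).
have bdelta_id :=
  bounded_measurableM (bdelta (fun d => d%:R)) (bounded_measurable_id cD).
have -> : m * (c * Ed - a * Ed2) = c * (m * Ed) - a * m * Ed2 by ring.
have -> : m * Ed = c^-1 * EF F (fun x => (delta x)%:R * x) + a * m / c * Ed2.
  rewrite divfK ?gt_eqF // -(EFZl _ bdelta_id) -(EFZl _ bdelta2) -EFD.
  - apply: eq_EF => x; rewrite inE => Dx; rewrite xi_best_response //.
    by rewrite /best_response; field; rewrite gt_eqF.
  - exact: bounded_measurableM (bounded_measurable_cst F _) bdelta_id.
  - exact: bounded_measurableM (bounded_measurable_cst F _) bdelta2.
by field; rewrite gt_eqF.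
Qed.

End endogenous_equilibrium.

Lemma neighbour_actions_ordered {R : realFieldType}
    (a c N Ed Ed2 Eth Edth m m' M M' : R) :
  0 < a -> a * N < c -> 0 < Ed -> Ed2 <= N * Ed -> 0 < Eth ->
  Ed ^+ 2 < Ed2 -> Ed * Eth < Edth ->
  m * (c * Ed - a * Ed2) = Edth -> m' * (c * Ed - a * Ed2) = Ed * Eth ->
  M * (c - a * Ed) = Eth -> M' * (c - a * Ed) = Eth ->
  [/\ M = M', M < m' & m' < m].
Proof.
move=> a0 aNc Ed0 Ed2N Eth0 var cov m_eq m'_eq M_eq M'_eq.
have den_gt0 : 0 < c * Ed - a * Ed2.
  rewrite subr_gt0 (le_lt_trans (y := a * N * Ed)) ?ltr_pM2r //.
  by rewrite -mulrA ler_pM2l.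
have var_a : Ed * (c - a * Ed) - (c * Ed - a * Ed2) = a * (Ed2 - Ed ^+ 2) by ring.
have den'_gt0 : 0 < c - a * Ed.
  rewrite -(pmulr_rgt0 _ Ed0) (lt_trans den_gt0) // -subr_gt0 var_a.
  by rewrite mulr_gt0 // subr_gt0.
split.
- by apply: (mulIf (lt0r_neq0 den'_gt0)); rewrite M_eq M'_eq.
- rewrite -subr_gt0 -(pmulr_lgt0 _ (mulr_gt0 den_gt0 den'_gt0)).
  have -> : (m' - M) * ((c * Ed - a * Ed2) * (c - a * Ed)) =
            m' * (c * Ed - a * Ed2) * (c - a * Ed)
            - M * (c - a * Ed) * (c * Ed - a * Ed2).
    by ring.
  rewrite m'_eq M_eq (_ : _ - _ = Eth * (a * (Ed2 - Ed ^+ 2))).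
    by rewrite !mulr_gt0 // subr_gt0.
  by rewrite -var_a; ring.
- by rewrite -subr_gt0 -(pmulr_lgt0 _ den_gt0) mulrBl m_eq m'_eq subr_gt0.
Qed.

Theorem proposition4 (R : realType) (n : nat) (a phi c k : R)
  (F : probability R R) (delta : R -> nat) (xi : R -> R)
  (x_friend_perp x_soc_end x_soc_perp : R -> nat -> R) :
  (2 <= n)%N -> 0 < a -> a * (n.-1)%:R < c -> a * (n.-1)%:R < k ->
  (forall x : R, F [set x] = 0%E) ->
  compact (supp F) ->
  supp F `<=` [set x | 0 <= x] ->
  end_friend_eq n a c k phi F delta xi ->
  two_degrees F delta ->
  friend_eq n a c F (EQ_perp n F delta) x_friend_perp ->
  soc_eq n a c F (EQ_end F delta) x_soc_end ->
  soc_eq n a c F (EQ_perp n F delta) x_soc_perp ->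
  (forall t1 t2, supp F t1 -> supp F t2 -> t1 <= t2 ->
     (delta t1 <= delta t2)%N) /\
  (forall t, supp F t -> (0 < delta t)%N ->
     [/\ x_friend_perp t (delta t) < xi t,
         x_soc_end t (delta t) < x_friend_perp t (delta t) &
         x_soc_end t (delta t) = x_soc_perp t (delta t)]).
Proof.
(* [2 <= n] is implied by [two_degrees]. *)
move=> _ a_gt0 ac ak atomless D_compact D_ge0 equilibrium two_deg
  friend_perp soc_end soc_perp.
have a_ge0 := ltW a_gt0.
have c_gt0 : 0 < c by apply: le_lt_trans ac; rewrite mulr_ge0.
have k_gt0 : 0 < k by apply: le_lt_trans ak; rewrite mulr_ge0.
have [[mdelta _] _ delta_xi Ed_gt0 _] := equilibrium.
have delta_lt x : supp F x -> (delta x < n)%N by move=> /delta_xi[].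
have delta_mono := delta_nondecreasing a_gt0 c_gt0 k_gt0 D_ge0 equilibrium.
have [var_gt0 cov_gt0] := two_degrees_var_cov_gt0 mdelta delta_lt atomless
  D_compact delta_mono two_deg.
have [M_eq M_lt m'_lt] := neighbour_actions_ordered a_gt0 ac Ed_gt0
  (EF_delta_sqr_le mdelta delta_lt) (EF_id_gt0 atomless D_compact D_ge0)
  var_gt0 cov_gt0 (Etil_xi_fixed a_gt0 c_gt0 D_ge0 equilibrium D_compact)
  (friend_eq_EQtil_perp_fixed a_ge0 c_gt0 D_ge0 D_compact mdelta delta_lt
     Ed_gt0 friend_perp)
  (soc_eq_EQ_end_fixed a_ge0 c_gt0 D_ge0 D_compact mdelta delta_lt soc_end)
  (soc_eq_EQ_perp_fixed a_ge0 c_gt0 D_ge0 D_compact mdelta delta_lt soc_perp).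
split=> // t Dt delta_gt0.
rewrite (xi_best_response a_gt0 c_gt0 D_ge0 equilibrium Dt).
rewrite (friend_eq_best_response a_ge0 c_gt0 D_ge0 friend_perp
  (admissible_EQtil_perp_ge0 delta friend_perp.1) Dt (delta_lt t Dt)).
rewrite (soc_eq_best_response a_ge0 c_gt0 D_ge0 soc_end
  (admissible_EQ_end_ge0 delta_lt soc_end.1) Dt (delta_lt t Dt)).
rewrite (soc_eq_best_response a_ge0 c_gt0 D_ge0 soc_perp
  (admissible_EQ_perp_ge0 delta soc_perp.1) Dt (delta_lt t Dt)).
by split; [apply: best_response_ltr..|rewrite M_eq].
Qed.
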